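(* Let $\ell>1$, $m_c\ge0$ with $4m_c^2\ge(3\ell-1)^2$, and $M=\frac{\sqrt{4m_c^2-(1-3\ell)^2}}{2(\ell-1)}$. Then there is a constant $C$ such that for all $z\in[1,\infty)$ $$\int_0^{z-1}\Big|\big((1+z)^2-y^2\big)^{-1/2}F\Big(\tfrac12+iM,\tfrac12+iM;1;\tfrac{(z-1)^2-y^2}{(z+1)^2-y^2}\Big)\Big|\,dy\le C(1+\ln z)^{1-\operatorname{sgn}M}.$$
   Context: $F(a,b;c;\zeta)$ is Gauss's hypergeometric function; $\operatorname{sgn}M=1$ if $M>0$, $0$ if $M=0$. *)

From Stdlib Require Import Reals Lra.
From Coquelicot Require Import Coquelicot.
Open Scope R_scope.

Fixpoint poch (a : C) (n : nat) : C :=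
  match n with
  | O => RtoC 1
  | S k => Cmult (poch a k) (Cplus a (RtoC (INR k)))
  end.

Definition hyp_term (a b c : C) (x : R) (n : nat) : C :=
  Cmult (Cdiv (Cmult (poch a n) (poch b n)) (Cmult (poch c n) (RtoC (INR (Stdlib.Arith.Factorial.fact n)))))
        (RtoC (x ^ n)).

Definition hyp2F1 (a b c : C) (x : R) : C :=
  (Series (fun n => Re (hyp_term a b c x n)), Series (fun n => Im (hyp_term a b c x n))).

(* sgn M = 1 if M > 0, 0 otherwise (M >= 0 in the application). *)
Definition sgn_nat (M : R) : nat := if Rlt_dec 0 M then 1%nat else 0%nat.

(* For a = 1/2 + iM the coefficients c_n = ((a)_n / n!)^2 of F(a,a;1;x) satisfy
   |c_(n+1)| (n+1)^2 = |c_n| ((n+1/2)^2 + M^2), whence (n+1) |c_n| <= exp (1 + 4 M^2).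
   This alone bounds the partial sums of F by O(log (1/(1-x))), and for
   x = ((z-1)^2 - y^2) / ((z+1)^2 - y^2) with 0 <= y <= z-1 one has 1/(1-x) <= z,
   so |F| = O(1 + ln z).  When M > 0 the same recurrence gives the Abel identity
   (2a-1) c_n = (n+1) c_(n+1) - n c_n - (a-1)^2 c_n / (n+1), and summation by parts
   bounds the partial sums uniformly in 0 <= x <= 1.  Finally
   ((1+z)^2 - y^2)^(-1/2) <= ((1+z) (1+z-y))^(-1/2), whose integral over [0, z-1]
   is less than 2. *)

From Stdlib Require Import Reals Lra Lia.
From Coquelicot Require Import Coquelicot.
Open Scope R_scope.

Definition hyp_coef (a b c : C) (n : nat) : C :=
  Cdiv (Cmult (poch a n) (poch b n)) (Cmult (poch c n) (RtoC (INR (Factorial.fact n)))).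

Lemma hyp_term_coef a b c x n :
  hyp_term a b c x n = Cmult (hyp_coef a b c n) (RtoC (x ^ n)).
Proof. reflexivity. Qed.

Lemma RtoC_neq_0 r : r <> 0 -> RtoC r <> 0%C.
Proof. intros Hr E; apply Hr; now injection E. Qed.

Lemma RtoC_INR_S_neq_0 n : (RtoC (INR n) + 1)%C <> 0%C.
Proof. rewrite <- RtoC_plus; apply RtoC_neq_0; pose proof (pos_INR n); lra. Qed.

Lemma poch_1 n : poch (RtoC 1) n = RtoC (INR (Factorial.fact n)).
Proof.
  induction n as [|n IH]; [reflexivity|].
  rewrite fact_simpl, mult_INR, S_INR; simpl poch; rewrite IH, !RtoC_mult, RtoC_plus.
  ring.
Qed.

Lemma hyp_coef_0 a b c : hyp_coef a b c 0 = 1%C.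
Proof. unfold hyp_coef; simpl; field; apply RtoC_neq_0; lra. Qed.

Lemma hyp_coef_diag_S a n :
  (hyp_coef a a 1 (S n) * (INR n + 1) ^ 2 = hyp_coef a a 1 n * (a + INR n) ^ 2)%C.
Proof.
  unfold hyp_coef; rewrite !poch_1, fact_simpl, mult_INR, S_INR; simpl poch.
  rewrite !RtoC_mult, !RtoC_plus.
  assert (RtoC (INR (Factorial.fact n)) <> 0%C) by apply RtoC_neq_0, INR_fact_neq_0.
  pose proof (RtoC_INR_S_neq_0 n).
  field; auto.
Qed.

Lemma hyp_coef_diag_abel a n :
  ((2 * a - 1) * hyp_coef a a 1 n =
   (INR n + 1) * hyp_coef a a 1 (S n) - INR n * hyp_coef a a 1 n
   - (a - 1) ^ 2 * hyp_coef a a 1 n / (INR n + 1))%C.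
Proof.
  pose proof (RtoC_INR_S_neq_0 n).
  replace (hyp_coef a a 1 (S n))
    with (hyp_coef a a 1 n * (a + INR n) ^ 2 / (INR n + 1) ^ 2)%C
    by (rewrite <- hyp_coef_diag_S; field; auto).
  field; auto.
Qed.

Lemma Cmod_hyp_coef_half_S M n :
  Cmod (hyp_coef (1/2, M) (1/2, M) 1 (S n)) =
  Cmod (hyp_coef (1/2, M) (1/2, M) 1 n) * ((INR n + 1/2) ^ 2 + M ^ 2) / (INR n + 1) ^ 2.
Proof.
  pose proof (pos_INR n).
  assert (Ha : Cmod (Cplus (1/2, M) (INR n)) ^ 2 = (INR n + 1/2) ^ 2 + M ^ 2)
    by (rewrite Cmod2_alt; simpl; ring).
  pose proof (f_equal Cmod (hyp_coef_diag_S (1/2, M) n)) as E.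
  rewrite !Cmod_mult, !Cmod_pow, <- RtoC_plus, Cmod_R, Rabs_pos_eq, Ha in E by lra.
  apply Rmult_eq_reg_r with ((INR n + 1) ^ 2); [|nra].
  rewrite E; field; lra.
Qed.

Lemma half_ratio_le_exp M t : 0 <= t ->
  ((t + 1/2) ^ 2 + M ^ 2) * (t + 1 + 1) / (t + 1) ^ 3
  <= exp ((1 + 4 * M ^ 2) / (t + 1) - (1 + 4 * M ^ 2) / (t + 1 + 1)).
Proof.
  intros Ht; set (m := t + 1).
  replace (t + 1/2) with (m - 1/2) by (unfold m; field).
  assert (Hm : 1 <= m) by (unfold m; lra).
  apply Rle_trans with (1 + (1 + 4 * M ^ 2) / (m * (m + 1))).
  - assert (0 < m ^ 3) by (apply pow_lt; lra).
    apply Rmult_le_reg_r with (m ^ 3 * (m + 1)); [nra|].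
    replace (((m - 1/2) ^ 2 + M ^ 2) * (m + 1) / m ^ 3 * (m ^ 3 * (m + 1)))
      with (((m - 1/2) ^ 2 + M ^ 2) * (m + 1) ^ 2) by (field; lra).
    replace ((1 + (1 + 4 * M ^ 2) / (m * (m + 1))) * (m ^ 3 * (m + 1)))
      with (m ^ 3 * (m + 1) + (1 + 4 * M ^ 2) * m ^ 2) by (field; lra).
    assert (0 <= (1 + 4 * M ^ 2) * ((3 * m + 1) * (m - 1))) by (apply Rmult_le_pos; nra).
    nra.
  - eapply Rle_trans; [|apply exp_ineq1_le]. right; field; lra.
Qed.

Lemma Cmod_hyp_coef_half_le M n :
  (INR n + 1) * Cmod (hyp_coef (1/2, M) (1/2, M) 1 n) <= exp (1 + 4 * M ^ 2).
Proof.
  set (T := 1 + 4 * M ^ 2).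
  assert (HT : 0 < T) by (unfold T; nra).
  enough (H : (INR n + 1) * Cmod (hyp_coef (1/2, M) (1/2, M) 1 n)
              <= exp (T - T / (INR n + 1))).
  { eapply Rle_trans; [exact H|]. apply Rlt_le, exp_increasing.
    assert (0 < T / (INR n + 1)) by (apply Rdiv_lt_0_compat; pose proof (pos_INR n); lra).
    lra. }
  induction n as [|n IH].
  - rewrite hyp_coef_0, Cmod_1; simpl.
    replace (T - T / (0 + 1)) with 0 by field; rewrite exp_0; lra.
  - pose proof (pos_INR n); rewrite Cmod_hyp_coef_half_S, S_INR.
    set (P := Cmod (hyp_coef (1/2, M) (1/2, M) 1 n)) in *.
    set (Q := (INR n + 1/2) ^ 2 + M ^ 2).
    replace ((INR n + 1 + 1) * (P * Q / (INR n + 1) ^ 2))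
      with ((INR n + 1) * P * (Q * (INR n + 1 + 1) / (INR n + 1) ^ 3)) by (field; lra).
    replace (T - T / (INR n + 1 + 1))
      with ((T - T / (INR n + 1)) + (T / (INR n + 1) - T / (INR n + 1 + 1))) by ring.
    rewrite exp_plus.
    apply Rmult_le_compat; [| | exact IH | apply half_ratio_le_exp; lra].
    + apply Rmult_le_pos; [lra | apply Cmod_ge_0].
    + apply Rdiv_le_0_compat; [unfold Q; nra | apply pow_lt; lra].
Qed.

Fixpoint Csum (f : nat -> C) (N : nat) : C :=
  match N with O => 0%C | S k => (Csum f k + f k)%C end.

Lemma Csum_S_pair (f : nat -> C) N :
  Csum f (S N) = (sum_n (fun n => Re (f n)) N, sum_n (fun n => Im (f n)) N).
Proof.
  induction N as [|N IH].
  - rewrite !sum_O; apply injective_projections; unfold Re, Im; simpl; ring.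
  - rewrite (sum_Sn (fun n => Re (f n))), (sum_Sn (fun n => Im (f n))).
    change (Csum f (S (S N))) with (Csum f (S N) + f (S N))%C.
    rewrite IH; reflexivity.
Qed.

Lemma Rabs_Series_le (u : nat -> R) K :
  (forall N, Rabs (sum_n u N) <= K) -> Rabs (Series u) <= K.
Proof.
  intros Hu.
  assert (Hb : forall n, - K <= sum_n u n <= K) by (intros n; apply Rabs_le_between, Hu).
  assert (Hub := Lim_seq_le_loc (sum_n u) (fun _ => K)).
  assert (Hlb := Lim_seq_le_loc (fun _ => - K) (sum_n u)).
  rewrite Lim_seq_const in Hub, Hlb.
  specialize (Hub ltac:(exists 0%nat; intros n _; apply Hb)).
  specialize (Hlb ltac:(exists 0%nat; intros n _; apply Hb)).
  unfold Series; destruct (Lim_seq (sum_n u)); simpl in *; try contradiction.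
  apply Rabs_le_between; lra.
Qed.

Lemma Cmod_Series_pair_le (f : nat -> C) K :
  (forall N, Cmod (Csum f N) <= K) ->
  Cmod (Series (fun n => Re (f n)), Series (fun n => Im (f n))) <= sqrt 2 * K.
Proof.
  intros Hf.
  assert (Hsum : forall N, Rmax (Rabs (sum_n (fun n => Re (f n)) N))
                                (Rabs (sum_n (fun n => Im (f n)) N)) <= K).
  { intros N; rewrite <- (Hf (S N)), Csum_S_pair. apply (Rmax_Cmod (_, _)). }
  eapply Rle_trans; [apply Cmod_2Rmax|].
  apply Rmult_le_compat_l; [apply sqrt_pos|]; simpl.
  apply Rmax_lub; apply Rabs_Series_le; intros N.
  - eapply Rle_trans; [apply Rmax_l | apply (Hsum N)].
  - eapply Rle_trans; [apply Rmax_r | apply (Hsum N)].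
Qed.

Fixpoint harmonic (n : nat) : R :=
  match n with O => 0 | S k => harmonic k + / (INR k + 1) end.

Lemma harmonic_le n m : (n <= m)%nat -> harmonic n <= harmonic m.
Proof.
  induction 1 as [|m _ IH]; simpl; [lra|].
  pose proof (pos_INR m); assert (0 < / (INR m + 1)) by (apply Rinv_0_lt_compat; lra); lra.
Qed.

Lemma harmonic_le_1_ln n : (1 <= n)%nat -> harmonic n <= 1 + ln (INR n).
Proof.
  induction 1 as [|n Hn IH]; simpl harmonic.
  - simpl; rewrite ln_1; lra.
  - rewrite S_INR.
    assert (1 <= INR n) by (apply le_INR in Hn; simpl in Hn; lra).
    pose proof (exp_ineq1_le (ln (INR n) + - ln (INR n + 1))) as Hexp.
    rewrite exp_plus, exp_Ropp, !exp_ln in Hexp by lra.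
    replace (INR n * / (INR n + 1)) with (1 - / (INR n + 1)) in Hexp by (field; lra).
    lra.
Qed.

Lemma Cmod_Csum_pow_harmonic_le (c : nat -> C) A x K N :
  0 <= x < 1 -> (forall n, (INR n + 1) * Cmod (c n) <= A) ->
  Cmod (Csum (fun n => Cmult (c n) (RtoC (x ^ n))) N)
  <= A * (harmonic K + / ((INR K + 1) * (1 - x))).
Proof.
  intros Hx Hc.
  assert (HA : 0 <= A) by (eapply Rle_trans; [|apply (Hc 0%nat)];
                           apply Rmult_le_pos; [simpl; lra | apply Cmod_ge_0]).
  pose proof (pos_INR K) as HK.
  assert (Hterm : forall n, Cmod (Cmult (c n) (RtoC (x ^ n))) <= A / (INR n + 1) * x ^ n).
  { intros n; pose proof (pos_INR n).
    rewrite Cmod_mult, Cmod_R, Rabs_pos_eq by (apply pow_le; lra).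
    apply Rmult_le_compat_r; [apply pow_le; lra|].
    apply Rmult_le_reg_l with (INR n + 1); [lra|]. rewrite (Hc n); right; field; lra. }
  (* terms with [n < K] are bounded by [A / (n + 1)], the others by [A x ^ n / (K + 1)] *)
  enough (H : Cmod (Csum (fun n => Cmult (c n) (RtoC (x ^ n))) N)
              <= A * (harmonic (Nat.min N K) + (1 - x ^ N) / ((INR K + 1) * (1 - x)))).
  { eapply Rle_trans; [exact H|]. apply Rmult_le_compat_l; [exact HA|].
    apply Rplus_le_compat; [apply harmonic_le, Nat.le_min_r|].
    apply Rle_trans with (1 * / ((INR K + 1) * (1 - x))); [|lra].
    apply Rmult_le_compat_r; [left; apply Rinv_0_lt_compat; nra|].
    assert (0 <= x ^ N) by (apply pow_le; lra); lra. }
  induction N as [|N IH].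
  - simpl; rewrite Cmod_0.
    replace ((1 - 1) / ((INR K + 1) * (1 - x))) with 0 by (field; nra); lra.
  - simpl Csum; eapply Rle_trans; [apply Cmod_triangle|].
    eapply Rle_trans; [apply Rplus_le_compat; [exact IH | apply Hterm]|].
    pose proof (pos_INR N).
    assert (0 <= x ^ N <= 1)
      by (split; [apply pow_le; lra | rewrite <- (pow1 N); apply pow_incr; lra]).
    replace ((1 - x ^ S N) / ((INR K + 1) * (1 - x)))
      with ((1 - x ^ N) / ((INR K + 1) * (1 - x)) + x ^ N / (INR K + 1)) by (simpl; field; nra).
    destruct (Nat.lt_ge_cases N K) as [HNK | HNK].
    + rewrite (Nat.min_l N K), (Nat.min_l (S N) K) by lia; simpl harmonic.
      assert (A / (INR N + 1) * x ^ N <= A * / (INR N + 1)).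
      { unfold Rdiv; rewrite <- (Rmult_1_r (A * / (INR N + 1))) at 2.
        apply Rmult_le_compat_l; [apply Rmult_le_pos, Rlt_le, Rinv_0_lt_compat|]; lra. }
      assert (0 <= A * (x ^ N / (INR K + 1))) by (apply Rmult_le_pos, Rdiv_le_0_compat; lra).
      nra.
    + rewrite (Nat.min_r N K), (Nat.min_r (S N) K) by lia.
      assert (A / (INR N + 1) * x ^ N <= A * (x ^ N / (INR K + 1))).
      { assert (/ (INR N + 1) <= / (INR K + 1))
          by (apply Rinv_le_contravar; [lra|]; apply le_INR in HNK; lra).
        replace (A / (INR N + 1) * x ^ N) with (A * x ^ N * / (INR N + 1)) by (field; lra).
        replace (A * (x ^ N / (INR K + 1))) with (A * x ^ N * / (INR K + 1)) by (field; lra).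
        apply Rmult_le_compat_l; [apply Rmult_le_pos|]; lra. }
      nra.
Qed.

Lemma Cmod_hyp2F1_le_harmonic a b c A x K :
  0 <= x < 1 -> (forall n, (INR n + 1) * Cmod (hyp_coef a b c n) <= A) ->
  Cmod (hyp2F1 a b c x) <= sqrt 2 * (A * (harmonic K + / ((INR K + 1) * (1 - x)))).
Proof.
  intros Hx Hc; apply Cmod_Series_pair_le; intros N.
  apply Cmod_Csum_pow_harmonic_le; assumption.
Qed.

Lemma inv_sqr_le_telescope t : 1 <= t -> / t ^ 2 <= 2 / t - 2 / (t + 1).
Proof.
  intros Ht.
  replace (2 / t - 2 / (t + 1)) with (/ t ^ 2 + (t - 1) / (t ^ 2 * (t + 1))) by (field; lra).
  assert (0 <= (t - 1) / (t ^ 2 * (t + 1))) by (apply Rdiv_le_0_compat; nra).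
  lra.
Qed.

Lemma Cmod_Csum_pow_abel_le (c e g : nat -> C) B G x N :
  0 <= x <= 1 ->
  (forall n, c n = (e (S n) - e n + g n)%C) ->
  (forall n, Cmod (e n) <= B) ->
  (forall n, (INR n + 1) ^ 2 * Cmod (g n) <= G) ->
  Cmod (Csum (fun n => Cmult (c n) (RtoC (x ^ n))) N) <= 2 * B + 2 * G.
Proof.
  intros Hx Hc He Hg.
  set (s := Csum (fun n => Cmult (c n) (RtoC (x ^ n)))).
  assert (Hpow : forall n, 0 <= x ^ n <= 1)
    by (intros n; split; [apply pow_le; lra | rewrite <- (pow1 n); apply pow_incr; lra]).
  assert (HG : 0 <= G)
    by (eapply Rle_trans; [|apply (Hg 0%nat)]; apply Rmult_le_pos; [simpl; lra | apply Cmod_ge_0]).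
  (* summation by parts *)
  assert (Hparts : forall n, Cmod (s n - e n * RtoC (x ^ n))%C
                             <= B * (2 - x ^ n) + G * (2 - 2 / (INR n + 1))).
  { intros n; induction n as [|n IH].
    - replace (s 0%nat - e 0%nat * RtoC (x ^ 0))%C with (- e 0%nat)%C by (unfold s; simpl; ring).
      rewrite Cmod_opp; pose proof (He 0%nat); simpl.
      replace (2 / (0 + 1)) with 2 by field; lra.
    - pose proof (pos_INR n).
      replace (s (S n) - e (S n) * RtoC (x ^ S n))%C
        with ((s n - e n * RtoC (x ^ n)) + (e (S n) * RtoC (x ^ n) * RtoC (1 - x)
              + g n * RtoC (x ^ n)))%C.
      2:{ unfold s; simpl Csum; rewrite Hc; simpl pow; rewrite !RtoC_mult, RtoC_minus. ring. }
      eapply Rle_trans; [apply Cmod_triangle|].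
      eapply Rle_trans; [apply Rplus_le_compat_l, Cmod_triangle|].
      rewrite !Cmod_mult, !Cmod_R, !Rabs_pos_eq by (apply Hpow || lra).
      assert (Hpart1 : Cmod (e (S n)) * x ^ n * (1 - x) <= B * (x ^ n - x ^ S n)).
      { replace (B * (x ^ n - x ^ S n)) with (B * x ^ n * (1 - x)) by (simpl; ring).
        apply Rmult_le_compat_r; [lra|]. apply Rmult_le_compat_r; [apply Hpow | apply He]. }
      assert (Hpart2 : Cmod (g n) * x ^ n <= G * (2 / (INR n + 1) - 2 / (INR n + 1 + 1))).
      { eapply Rle_trans with (G * / (INR n + 1) ^ 2).
        - apply Rmult_le_reg_l with ((INR n + 1) ^ 2); [nra|].
          pose proof (Hg n); pose proof (Hpow n); pose proof (Cmod_ge_0 (g n)).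
          replace ((INR n + 1) ^ 2 * (G * / (INR n + 1) ^ 2)) with G by (field; lra).
          nra.
        - apply Rmult_le_compat_l, inv_sqr_le_telescope; lra. }
      rewrite S_INR. lra. }
  change (Csum _ N) with (s N).
  replace (s N) with ((s N - e N * RtoC (x ^ N)) + e N * RtoC (x ^ N))%C by ring.
  eapply Rle_trans; [apply Cmod_triangle|].
  rewrite Cmod_mult, Cmod_R, Rabs_pos_eq by apply Hpow.
  pose proof (Hparts N); pose proof (He N); pose proof (Hpow N); pose proof (pos_INR N).
  assert (0 <= G * (2 / (INR N + 1))) by (apply Rmult_le_pos, Rdiv_le_0_compat; lra).
  nra.
Qed.

Lemma Cmod_hyp2F1_diag_le a A x :
  (2 * a - 1)%C <> 0%C -> 0 <= x <= 1 ->
  (forall n, (INR n + 1) * Cmod (hyp_coef a a 1 n) <= A) ->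
  Cmod (hyp2F1 a a 1 x) <= sqrt 2 * (2 * (1 + Cmod (a - 1) ^ 2) * A / Cmod (2 * a - 1)).
Proof.
  intros Hd Hx Hc; apply Cmod_Series_pair_le; intros N.
  set (d := (2 * a - 1)%C) in *.
  assert (Hd' : 0 < Cmod d) by (apply Cmod_gt_0; exact Hd).
  replace (2 * (1 + Cmod (a - 1) ^ 2) * A / Cmod d)
    with (2 * (A / Cmod d) + 2 * (Cmod (a - 1) ^ 2 * A / Cmod d)) by (field; lra).
  (* the Abel identity [hyp_coef_diag_abel], divided by [d], exhibits [hyp_coef] as a
     telescoping difference plus an [O(1/n^2)] remainder *)
  apply (Cmod_Csum_pow_abel_le (hyp_coef a a 1)
           (fun n => INR n * hyp_coef a a 1 n / d)%C
           (fun n => - (a - 1) ^ 2 * hyp_coef a a 1 n / ((INR n + 1) * d))%C); [exact Hx | | |].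
  - intros n. pose proof (RtoC_INR_S_neq_0 n).
    transitivity (d * hyp_coef a a 1 n / d)%C; [field; exact Hd|].
    unfold d; rewrite hyp_coef_diag_abel, S_INR, RtoC_plus. field; auto.
  - intros n. pose proof (pos_INR n); pose proof (Hc n); pose proof (Cmod_ge_0 (hyp_coef a a 1 n)).
    rewrite Cmod_div, Cmod_mult, Cmod_R, Rabs_pos_eq by (auto; lra).
    apply Rmult_le_compat_r; [left; apply Rinv_0_lt_compat; lra | nra].
  - intros n. pose proof (pos_INR n); pose proof (Hc n).
    pose proof (RtoC_INR_S_neq_0 n).
    rewrite Cmod_div, !Cmod_mult, Cmod_opp, Cmod_pow by (apply Cmult_neq_0; auto).
    rewrite <- RtoC_plus, Cmod_R, Rabs_pos_eq by lra.
    replace ((INR n + 1) ^ 2 *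
             (Cmod (a - 1) ^ 2 * Cmod (hyp_coef a a 1 n) / ((INR n + 1) * Cmod d)))
      with (Cmod (a - 1) ^ 2 * ((INR n + 1) * Cmod (hyp_coef a a 1 n)) / Cmod d) by (field; lra).
    apply Rmult_le_compat_r; [left; apply Rinv_0_lt_compat; lra|].
    apply Rmult_le_compat_l; [apply pow2_ge_0 | assumption].
Qed.

Definition gauss_arg (z y : R) : R := ((z - 1) ^ 2 - y ^ 2) / ((z + 1) ^ 2 - y ^ 2).

Lemma gauss_arg_bounds z y : 1 <= z -> 0 <= y <= z - 1 -> 0 <= gauss_arg z y < 1.
Proof.
  intros Hz Hy; unfold gauss_arg.
  assert (0 < (z + 1) ^ 2 - y ^ 2) by nra.
  split; [apply Rdiv_le_0_compat; nra|].
  apply Rmult_lt_reg_r with ((z + 1) ^ 2 - y ^ 2); [lra|].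
  unfold Rdiv; rewrite Rmult_assoc, Rinv_l by lra; nra.
Qed.

Lemma gauss_arg_gap z y : 1 <= z -> 0 <= y <= z - 1 -> 1 <= z * (1 - gauss_arg z y).
Proof.
  intros Hz Hy; unfold gauss_arg.
  assert (0 < (z + 1) ^ 2 - y ^ 2) by nra.
  replace (z * (1 - ((z - 1) ^ 2 - y ^ 2) / ((z + 1) ^ 2 - y ^ 2)))
    with (4 * z ^ 2 / ((z + 1) ^ 2 - y ^ 2)) by (field; lra).
  apply Rmult_le_reg_r with ((z + 1) ^ 2 - y ^ 2); [lra|].
  unfold Rdiv; rewrite Rmult_assoc, Rinv_l by lra; nra.
Qed.

Lemma Cmod_hyp2F1_gauss_arg_le_ln a b c A z y :
  1 <= z -> 0 <= y <= z - 1 -> (forall n, (INR n + 1) * Cmod (hyp_coef a b c n) <= A) ->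
  Cmod (hyp2F1 a b c (gauss_arg z y)) <= 2 * sqrt 2 * A * (1 + ln z).
Proof.
  intros Hz Hy Hc.
  destruct (nfloor_ex z ltac:(lra)) as [K HK].
  assert (HK1 : (1 <= K)%nat) by (destruct K; [simpl in HK; lra | lia]).
  assert (HA : 0 <= A)
    by (eapply Rle_trans; [|apply (Hc 0%nat)]; apply Rmult_le_pos; [simpl; lra | apply Cmod_ge_0]).
  assert (Hln : 0 <= ln z) by (rewrite <- ln_1; apply ln_le; lra).
  pose proof (gauss_arg_bounds z y Hz Hy); pose proof (gauss_arg_gap z y Hz Hy).
  eapply Rle_trans; [apply (Cmod_hyp2F1_le_harmonic a b c A _ K); assumption|].
  assert (Hharm : harmonic K <= 1 + ln z).
  { eapply Rle_trans; [apply harmonic_le_1_ln, HK1|].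
    apply Rplus_le_compat_l, ln_le; [apply lt_0_INR; lia | apply HK]. }
  assert (Hgap : / ((INR K + 1) * (1 - gauss_arg z y)) <= 1).
  { rewrite <- Rinv_1; apply Rinv_le_contravar; [lra|]. nra. }
  pose proof (sqrt_pos 2).
  assert (0 <= sqrt 2 * A) by (apply Rmult_le_pos; lra).
  nra.
Qed.

Lemma hyp2F1_PSeries a b c x :
  hyp2F1 a b c x = (PSeries (fun n => Re (hyp_coef a b c n)) x,
                    PSeries (fun n => Im (hyp_coef a b c n)) x).
Proof.
  unfold hyp2F1, PSeries; f_equal; apply Series_ext; intros n;
    rewrite hyp_term_coef; [apply re_scal_r | apply im_scal_r].
Qed.

Lemma continuous_PSeries_bounded (u : nat -> R) A x :
  (forall n, Rabs (u n) <= A) -> Rabs x < 1 -> continuous (PSeries u) x.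
Proof.
  intros Hu Hx.
  apply continuity_pt_filterlim, PSeries_continuity.
  set (r := (1 + Rabs x) / 2).
  assert (Hr : 0 <= r <= 1) by (pose proof (Rabs_pos x); unfold r; lra).
  apply Rbar_lt_le_trans with r; [simpl; unfold r; lra|].
  apply (proj1 (CV_radius_bounded u)).
  exists A; intros n.
  rewrite Rabs_mult, (Rabs_pos_eq (r ^ n)) by (apply pow_le; lra).
  rewrite <- (Rmult_1_r A).
  apply Rmult_le_compat; [apply Rabs_pos | apply pow_le; lra | apply Hu |].
  rewrite <- (pow1 n); apply pow_incr; lra.
Qed.

Lemma im_le_Cmod z : Rabs (Im z) <= Cmod z.
Proof. destruct z as [u v]; eapply Rle_trans; [apply Rmax_r | apply (Rmax_Cmod (u, v))]. Qed.

Lemma continuous_Cmod_hyp2F1 a b c A x :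
  (forall n, Cmod (hyp_coef a b c n) <= A) -> Rabs x < 1 ->
  continuous (fun t => Cmod (hyp2F1 a b c t)) x.
Proof.
  intros Hc Hx.
  set (u := PSeries (fun n => Re (hyp_coef a b c n))).
  set (v := PSeries (fun n => Im (hyp_coef a b c n))).
  assert (Hu : continuous u x).
  { apply continuous_PSeries_bounded with A; auto.
    intros n; eapply Rle_trans; [apply re_le_Cmod | apply Hc]. }
  assert (Hv : continuous v x).
  { apply continuous_PSeries_bounded with A; auto.
    intros n; eapply Rle_trans; [apply im_le_Cmod | apply Hc]. }
  apply continuous_ext with (fun t => sqrt (u t * u t + v t * v t)).
  { intros t; rewrite hyp2F1_PSeries; unfold Cmod; cbn [fst snd]; fold u v; f_equal; ring. }
  apply (continuous_comp (fun t => u t * u t + v t * v t) sqrt).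
  - apply (continuous_plus (fun t => u t * u t) (fun t => v t * v t));
      apply (continuous_mult (K := R_AbsRing)); assumption.
  - apply continuity_pt_filterlim, continuity_pt_sqrt; nra.
Qed.

Lemma RInt_le_inv_sqrt_kernel (f : R -> R) z K : 1 <= z -> 0 <= K ->
  (forall y, 0 <= y <= z - 1 -> continuous f y) ->
  (forall y, 0 <= y <= z - 1 -> f y <= K / sqrt ((1 + z) ^ 2 - y ^ 2)) ->
  RInt f 0 (z - 1) <= 2 * K.
Proof.
  intros Hz HK Hcont Hf.
  assert (Hs : 0 < sqrt (1 + z)) by (apply sqrt_lt_R0; lra).
  assert (Hmin : Rmin 0 (z - 1) = 0) by (apply Rmin_left; lra).
  assert (Hmax : Rmax 0 (z - 1) = z - 1) by (apply Rmax_right; lra).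
  set (h := fun y => K / (sqrt (1 + z) * sqrt (1 + z - y))).
  set (H := fun y => - 2 * K * sqrt (1 + z - y) / sqrt (1 + z)).
  assert (Hh : is_RInt h 0 (z - 1) (H (z - 1) - H 0)).
  { apply (is_RInt_derive (V := R_CompleteNormedModule)); rewrite Hmin, Hmax; intros y Hy.
    - assert (0 < sqrt (1 + z - y)) by (apply sqrt_lt_R0; lra).
      unfold H, h; auto_derive; [lra|].
      replace (1 + z + - y) with (1 + z - y) by ring; field; lra.
    - assert (0 < sqrt (1 + z - y)) by (apply sqrt_lt_R0; lra).
      apply (ex_derive_continuous (K := R_AbsRing) (V := R_NormedModule)).
      unfold h; auto_derive; repeat split; [lra|].
      replace (1 + z + - y) with (1 + z - y) by ring; apply Rgt_not_eq; nra. }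
  apply Rle_trans with (RInt h 0 (z - 1)).
  - apply RInt_le; [lra | | eexists; exact Hh |].
    + apply (ex_RInt_continuous (V := R_CompleteNormedModule)); rewrite Hmin, Hmax; exact Hcont.
    + intros y Hy; eapply Rle_trans; [apply Hf; lra|].
      assert (0 < sqrt (1 + z - y)) by (apply sqrt_lt_R0; lra).
      apply Rmult_le_compat_l; [exact HK|]. apply Rinv_le_contravar; [nra|].
      rewrite <- sqrt_mult by lra; apply sqrt_le_1; nra.
  - rewrite (is_RInt_unique _ _ _ _ Hh); unfold H.
    replace (1 + z - (z - 1)) with 2 by ring; replace (1 + z - 0) with (1 + z) by ring.
    assert (0 <= 2 * K * sqrt 2 / sqrt (1 + z))
      by (apply Rdiv_le_0_compat; [pose proof (sqrt_pos 2); nra | lra]).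
    replace (- 2 * K * sqrt 2 / sqrt (1 + z) - - 2 * K * sqrt (1 + z) / sqrt (1 + z))
      with (2 * K - 2 * K * sqrt 2 / sqrt (1 + z)) by (field; lra).
    lra.
Qed.

Lemma RInt_Cmod_hyp2F1_kernel_le a b c A z K :
  1 <= z -> 0 <= K -> (forall n, Cmod (hyp_coef a b c n) <= A) ->
  (forall y, 0 <= y <= z - 1 -> Cmod (hyp2F1 a b c (gauss_arg z y)) <= K) ->
  RInt (fun y => Cmod (Cmult (RtoC (/ sqrt ((1 + z) ^ 2 - y ^ 2)))
                             (hyp2F1 a b c (gauss_arg z y))))
       0 (z - 1) <= 2 * K.
Proof.
  intros Hz HK Hc HF.
  apply RInt_le_inv_sqrt_kernel; [exact Hz | exact HK | |]; intros y Hy;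
    assert (HQ : 0 < sqrt ((1 + z) ^ 2 - y ^ 2)) by (apply sqrt_lt_R0; nra).
  - apply continuous_ext
      with (fun y => Rabs (/ sqrt ((1 + z) ^ 2 - y ^ 2)) * Cmod (hyp2F1 a b c (gauss_arg z y))).
    { intros t; rewrite Cmod_mult, Cmod_R; reflexivity. }
    apply (continuous_mult (K := R_AbsRing)).
    + apply continuous_Rabs_comp, (ex_derive_continuous (K := R_AbsRing) (V := R_NormedModule)).
      auto_derive; split; [nra | split; [|exact I]].
      replace ((1 + z) * ((1 + z) * 1) + - (y * (y * 1))) with ((1 + z) ^ 2 - y ^ 2)
        by ring; lra.
    + apply (continuous_comp (gauss_arg z) (fun t => Cmod (hyp2F1 a b c t))).
      * apply (ex_derive_continuous (K := R_AbsRing) (V := R_NormedModule)).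
        unfold gauss_arg; auto_derive; nra.
      * pose proof (gauss_arg_bounds z y Hz Hy).
        apply continuous_Cmod_hyp2F1 with A; [exact Hc | rewrite Rabs_pos_eq; lra].
  - rewrite Cmod_mult, Cmod_R, Rabs_pos_eq by (left; apply Rinv_0_lt_compat, HQ).
    rewrite Rmult_comm; apply Rmult_le_compat_r; [left; apply Rinv_0_lt_compat, HQ | auto].
Qed.

Theorem lemma3p2 (l mc : R) (hl : 1 < l) (hmc : 0 <= mc)
  (hM : (3 * l - 1) ^ 2 <= 4 * mc ^ 2) :
  let M := sqrt (4 * mc ^ 2 - (1 - 3 * l) ^ 2) / (2 * (l - 1)) in
  let a : C := (1 / 2, M) in
  exists Cst : R, forall z : R, 1 <= z ->
    RInt (fun y => Cmod (Cmult (RtoC (/ sqrt ((1 + z) ^ 2 - y ^ 2)))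
                               (hyp2F1 a a (RtoC 1)
                                  (((z - 1) ^ 2 - y ^ 2) / ((z + 1) ^ 2 - y ^ 2)))))
         0 (z - 1)
    <= Cst * (1 + ln z) ^ (1 - sgn_nat M).
Proof.
  intros M a.
  set (A := exp (1 + 4 * M ^ 2)).
  assert (HA : 0 < A) by apply exp_pos.
  assert (HcA : forall n, (INR n + 1) * Cmod (hyp_coef a a 1 n) <= A)
    by (intros n; apply Cmod_hyp_coef_half_le).
  assert (Hc : forall n, Cmod (hyp_coef a a 1 n) <= A).
  { intros n; eapply Rle_trans; [|apply (HcA n)].
    pose proof (pos_INR n); pose proof (Cmod_ge_0 (hyp_coef a a 1 n)); nra. }
  pose proof (sqrt_pos 2).
  unfold sgn_nat; destruct (Rlt_dec 0 M) as [HM | _].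
  - set (K := sqrt 2 * (2 * (1 + Cmod (a - 1) ^ 2) * A / Cmod (2 * a - 1))).
    assert (Hd : (2 * a - 1)%C <> 0%C).
    { intros E; apply (f_equal Im) in E; unfold a in E; simpl in E; lra. }
    exists (2 * K); intros z Hz; rewrite Nat.sub_diag, pow_O, Rmult_1_r.
    apply RInt_Cmod_hyp2F1_kernel_le with A; auto.
    + unfold K; pose proof (proj1 (Cmod_gt_0 _) Hd); pose proof (pow2_ge_0 (Cmod (a - 1))).
      apply Rmult_le_pos, Rdiv_le_0_compat; nra.
    + intros y Hy; pose proof (gauss_arg_bounds z y Hz Hy).
      apply Cmod_hyp2F1_diag_le; auto; lra.
  - exists (4 * sqrt 2 * A); intros z Hz; rewrite Nat.sub_0_r, pow_1.
    replace (4 * sqrt 2 * A * (1 + ln z)) with (2 * (2 * sqrt 2 * A * (1 + ln z))) by ring.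
    assert (0 <= ln z) by (rewrite <- ln_1; apply ln_le; lra).
    apply RInt_Cmod_hyp2F1_kernel_le with A; auto.
    + apply Rmult_le_pos; [|lra]. apply Rmult_le_pos; lra.
    + intros y Hy; apply Cmod_hyp2F1_gauss_arg_le_ln; auto.
Qed.
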